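(* Let $p$ be a prime and let $n=p^{\beta}(pq+r)$ with $\beta,q,r\in\mathbb{N}$ and $\{-q\}_{p-1}<r<p$. Then $$\operatorname{ord}_p(n!)=\Big\lfloor\frac{n-1}{p-1}\Big\rfloor\iff q=0.$$
   Context: $\{a\}_{m}$ denotes the least nonnegative residue of the integer $a$ modulo the positive integer $m$. $\operatorname{ord}_p$ is the $p$-adic order. *)

From mathcomp Require Import all_boot all_order all_algebra.
Set Implicit Arguments. Unset Strict Implicit. Unset Printing Implicit Defensive.
Import GRing.Theory Num.Theory.

(* {a}_m : the least nonnegative residue of the integer a modulo the positive
   integer m (intdiv's modz is the least nonnegative residue for m <> 0). *)
Definition lnres (a : int) (m : nat) : nat := `|(a %% (m%:Z))%Z|%N.

From mathcomp Require Import all_boot all_order all_algebra.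
From mathcomp Require Import zify ring.

(* By Legendre's formula (p - 1) ord_p(n!) = n - s_p(n), where s_p is the
   base-p digit sum, so
     floor((n - 1)/(p - 1)) = ord_p(n!) + floor((s_p(n) - 1)/(p - 1)),
   and equality holds iff s_p(n) < p.  For n = p^beta (pq + r) one has
   s_p(n) = s_p(q) + r.  If q = 0 this is r < p.  If q > 0 then s_p(q) >= 1 and
   s_p(q) = q (mod p - 1), so s_p(q) + r < p would force
   {-q}_{p-1} = p - 1 - s_p(q) >= r, against the hypothesis. *)

Lemma digit_ind {p : nat} {P : nat -> Prop} : 1 < p ->
  P 0 -> (forall m r, r < p -> P m -> P (p * m + r)) -> forall m, P m.
Proof.
move=> p_gt1 P0 Pstep m; elim: m {-2}m (leqnn m) => [|N IH] m le_m_N.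
  by move: le_m_N; rewrite leqn0 => /eqP->.
case: (posnP m) => [->|m_gt0] //.
rewrite (divn_eq m p) mulnC; apply: Pstep; first by rewrite ltn_mod ltnW.
by apply: IH; rewrite -ltnS; apply: leq_trans le_m_N; apply: ltn_Pdiv.
Qed.

Lemma logn_fact_pMD (p m r : nat) : prime p -> r < p ->
  logn p (p * m + r)`! = m + logn p m`!.
Proof.
move=> p_pr lt_r_p; have p_gt0 := prime_gt0 p_pr.
have logn_fact_upto N k : k <= N -> logn p k`! = \sum_(1 <= i < N.+1) k %/ p ^ i.
  move=> le_k_N; rewrite logn_fact // [RHS](@big_cat_nat _ _ _ k.+1) //=.
  rewrite [X in _ = _ + X]big1_seq ?addn0 // => i /andP[_].
  rewrite mem_index_iota => /andP[lt_k_i _].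
  exact/divn_small/(leq_trans lt_k_i)/ltnW/ltn_expl/prime_gt1.
rewrite mulnC (logn_fact_upto (m * p + r).+1) // big_ltn //= expn1 divnMDl //.
rewrite divn_small // addn0 big_add1 /= (logn_fact_upto (m * p + r) m); last first.
  by rewrite (leq_trans (leq_pmulr _ p_gt0)) ?leq_addr.
congr (_ + _); apply: eq_bigr => i _.
by rewrite expnS divnMA divnMDl // (divn_small lt_r_p) addn0.
Qed.

Lemma logn_fact_bound (p m : nat) : prime p -> p.-1 * logn p m`! <= m.
Proof.
move=> p_pr; move: m; apply: (digit_ind (prime_gt1 p_pr)) => [|m r lt_r_p IH].
  by rewrite logn1 muln0.
rewrite logn_fact_pMD //; move: (prime_gt1 p_pr) IH; nia.
Qed.

(* Legendre's formula makes this the base-p digit sum of m. *)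
Definition digit_sum (p m : nat) : nat := m - p.-1 * logn p m`!.

Section DigitSum.

Context {p : nat} (p_pr : prime p).

Lemma logn_fact_digit_sum (m : nat) : p.-1 * logn p m`! + digit_sum p m = m.
Proof. by rewrite subnKC ?logn_fact_bound. Qed.

Lemma digit_sum_pMD (m r : nat) : r < p ->
  digit_sum p (p * m + r) = digit_sum p m + r.
Proof.
move=> lt_r_p; have := logn_fact_bound p m p_pr.
rewrite /digit_sum logn_fact_pMD //; move: (prime_gt1 p_pr); nia.
Qed.

Lemma digit_sum_expMn (b m : nat) : digit_sum p (p ^ b * m) = digit_sum p m.
Proof.
elim: b => [|b IH]; first by rewrite mul1n.
by rewrite expnS -mulnA -[_ * _]addn0 digit_sum_pMD ?prime_gt0 // addn0.
Qed.

Lemma digit_sum_gt0 (m : nat) : 0 < m -> 0 < digit_sum p m.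
Proof.
move: m; apply: (digit_ind (prime_gt1 p_pr)) => // m r lt_r_p IH.
rewrite digit_sum_pMD //; case: (posnP m) => [->|m_gt0]; first by rewrite muln0.
by move=> _; rewrite addn_gt0 IH.
Qed.

Lemma logn_fact_eq_div_pred (n : nat) : 0 < n ->
  logn p n`! = (n - 1) %/ (p - 1) <-> digit_sum p n < p.
Proof.
move=> n_gt0; have p_gt1 := prime_gt1 p_pr.
have s_gt0 : 0 < digit_sum p n by apply: digit_sum_gt0.
rewrite -[in n - 1](logn_fact_digit_sum n) -addnBA // !subn1 mulnC.
rewrite divnMDl -?subn1 ?subn_gt0 // -[X in X = _]addn0.
split=> [/addnI quot0 | lt_s_p].
  have : ~~ (0 < (digit_sum p n - 1) %/ (p - 1)) by rewrite -quot0.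
  by rewrite divn_gt0 ?subn_gt0 // -ltnNge; lia.
by rewrite divn_small //; lia.
Qed.

End DigitSum.

Lemma lnres_opp (m L s : nat) : 0 < s < m ->
  lnres (- (m * L + s)%:Z)%R m = m - s.
Proof.
move=> /andP[s_gt0 lt_s_m]; rewrite /lnres.
have -> : (- (m * L + s)%:Z = (- (L.+1)%:Z) * m%:Z + (m - s)%:Z)%R.
  rewrite PoszD PoszM -subzn ?(ltnW lt_s_m) // -addn1 PoszD; ring.
by rewrite modzMDl modz_small // ltz_nat le0z_nat /=; lia.
Qed.

Theorem lemma4p1 (p beta q r n : nat) :
  prime p ->
  n = p ^ beta * (p * q + r) ->
  lnres (- (q%:Z))%R p.-1 < r < p ->
  (logn p n`! = (n - 1) %/ (p - 1)) <-> q = 0.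
Proof.
move=> p_pr -> /andP[lt_res_r lt_r_p].
have r_gt0 : 0 < r by apply: leq_ltn_trans lt_res_r.
rewrite (logn_fact_eq_div_pred p_pr); last first.
  by rewrite muln_gt0 expn_gt0 prime_gt0 // addn_gt0 r_gt0 orbT.
rewrite (digit_sum_expMn p_pr) (digit_sum_pMD p_pr) //.
split=> [lt_sum_p | ->]; last by [].
case: (posnP q) => // q_gt0.
have s_gt0 : 0 < digit_sum p q by apply: digit_sum_gt0.
move: lt_res_r; rewrite -(logn_fact_digit_sum p_pr q) lnres_opp; lia.
Qed.
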